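(* Let $n\ge1$, distinct real $a_1,\dots,a_n$, $F(a)=\sum_{k=0}^nA_ka^k=\prod_{i=1}^n(a-a_i)$, signs $\epsilon_i$, reals $\xi_i,\nu_n$, $\Delta_i=\epsilon_i(a-a_i)$, $x=\frac{\nu_n}2a+\sum_i\xi_i\Delta_i^{-1/2}$ on an interval of $a>0$ where all $\Delta_i>0$ and $\dot x\ne0$. Let $H=\Pi^2+aP_y^2$, $\Pi=\frac a{\dot x}P_a$, $$G=\sum_{k=0}^nA_{n-k}H^{n-k}P_y^{2k+1},\ Q_1=\sum_{k=0}^n\tilde b_kH^{n-k}\Pi P_y^{2k},\ Q_2=\sum_{k=0}^n\tilde c_kH^{n-k}P_y^{2k+1},\ S_1=Q_1+yG,\ S_2=Q_2+yQ_1+\tfrac{y^2}2G,$$ with $\tilde b_k=(-1)^k\big(\nu_n\sigma_k+\sum_i\frac{\xi_i}{\sqrt{\Delta_i}}\sigma^i_{k-1}\big)$ and $\tilde c_k=\frac{(-1)^{k+1}}2\big\{\nu_n^2a\sigma_k+2\nu_n\sum_i\frac{\xi_i}{\sqrt{\Delta_i}}(\sigma^i_k+a\sigma^i_{k-1})+\sum_i\frac{\xi_i^2}{\Delta_i}\sigma^i_{k-1}+\sum_{i\ne j}\frac{\xi_i\xi_j}{\sqrt{\Delta_i\Delta_j}}(\sigma^{ij}_{k-1}+a\sigma^{ij}_{k-2})\big\}$. Then $$S_1^2-2G\,S_2=\sum_{k,l=1}^n\mathcal{Q}_{kl}\,H^{2n-k-l}P_y^{2(k+l+1)}+\nu_n^2\sum_{k,l=0}^n(-1)^{k+l}\sigma_k\sigma_l\,H^{2n+1-k-l}P_y^{2(k+l)},$$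 where $\mathcal{Q}_{kl}=(-1)^{k+l+1}\sum_{i=1}^n\epsilon_i\xi_i^2\sigma^i_{k-1}\sigma^i_{l-1}$.
   Context: Symmetric functions: $\sigma_k$ by $\prod_i(a-a_i)=\sum_{k=0}^n(-1)^k\sigma_ka^{n-k}$; $\sigma^i_m$ ($-1\le m\le n$) by $\prod_{l\ne i}(a-a_l)=\sum_{m=0}^{n-1}(-1)^m\sigma^i_ma^{n-1-m}$ with $\sigma^i_{-1}=\sigma^i_n=0$; $\sigma^{ij}_m$ ($i\ne j$, $-2\le m\le n$) by $\prod_{l\ne i,j}(a-a_l)=\sum_{m=0}^{n-2}(-1)^m\sigma^{ij}_ma^{n-2-m}$ with $\sigma^{ij}_{-2}=\sigma^{ij}_{-1}=\sigma^{ij}_{n-1}=\sigma^{ij}_n=0$. *)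

From HB Require Import structures.
From mathcomp Require Import all_boot all_order all_algebra.
From mathcomp Require Import all_classical all_reals all_analysis.
Set Implicit Arguments. Unset Strict Implicit. Unset Printing Implicit Defensive.
Import Order.TTheory GRing.Theory Num.Theory.
Local Open Scope ring_scope.

(* Elementary symmetric functions of the family (a l)_{l in I}, defined as in
   the paper through the expansion
     prod_{l in I} (X - a_l) = sum_{m=0}^{#|I|} (-1)^m esym_m X^{#|I|-m},
   indexed by an integer m, and equal to 0 for m < 0 or m > #|I|. *)
Definition esym (R : comNzRingType) (n : nat) (a : 'I_n -> R) (I : {set 'I_n})
    (m : int) : R :=
  match m with
  | Posz k => if (k <= #|I|)%N then
                (-1) ^+ k * (\prod_(l in I) ('X - (a l)%:P))`_(#|I| - k)
              else 0
  | Negz _ => 0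
  end.

Definition sigma (R : comNzRingType) n (a : 'I_n -> R) (k : int) : R :=
  esym a [set: 'I_n] k.
Definition sigma1 (R : comNzRingType) n (a : 'I_n -> R) (i : 'I_n) (m : int) : R :=
  esym a (~: [set i]) m.
Definition sigma2 (R : comNzRingType) n (a : 'I_n -> R) (i j : 'I_n) (m : int) : R :=
  esym a (~: [set i; j]) m.

Definition Acoef (R : comNzRingType) n (a : 'I_n -> R) (k : nat) : R :=
  (\prod_(i < n) ('X - (a i)%:P))`_k.

From Pilot Require Import Defs.
From HB Require Import structures.
From mathcomp Require Import all_boot all_order all_algebra.
From mathcomp Require Import all_classical all_reals all_analysis.
From mathcomp Require Import ring zify.
Import Order.TTheory GRing.Theory Num.Theory.
Set Implicit Arguments. Unset Strict Implicit. Unset Printing Implicit Defensive.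
Local Open Scope ring_scope.

(* With u = P_y^2, each of G, Q_1, Q_2 and the two double sums of the right-hand side
   is assembled from alternating homogeneous sums
     sum_k (-1)^k sigma_(k-d)(I) H^(N-k) u^k = (-1)^d u^d H^(N-d-|I|) prod_(l in I) (H - a_l u),
   obtained by homogenising prod_(l in I) (X - a_l).  Write P, P_i, P_ij for these products
   over all indices, all but i, and all but i and j, and W = sum_i w_i P_i with
   w_i = xi_i / sqrt Delta_i; then G = P_y P and Q_1 = Pi (nu P - u W), and the y-terms
   cancel in S_1^2 - 2 G S_2.  As Pi^2 = H - a u, what remains is a polynomial identity in
   the P's that follows from P = (H - a_i u) P_i and P P_ij = P_i P_j; the coefficient
   w_i^2 (a - a_i) that survives is eps_i xi_i^2. *)

Definition hprod (F : comNzRingType) n (ai : 'I_n -> F) (I : {set 'I_n}) (H u : F) :=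
  \prod_(l in I) (H - ai l * u).

Definition alt_hsum (F : comNzRingType) (N : nat) (H u : F) (f : nat -> F) :=
  \sum_(0 <= k < N.+1) (-1) ^+ k * f k * H ^+ (N - k) * u ^+ k.

Section AltHsum.
Variables (F : comNzRingType) (N : nat) (H u : F).

Lemma alt_hsumD f g :
  alt_hsum N H u (fun k => f k + g k) = alt_hsum N H u f + alt_hsum N H u g.
Proof. by rewrite /alt_hsum -big_split; apply: eq_bigr => k _ /=; ring. Qed.

Lemma alt_hsumZ c f : alt_hsum N H u (fun k => c * f k) = c * alt_hsum N H u f.
Proof. by rewrite /alt_hsum mulr_sumr; apply: eq_bigr => k _; ring. Qed.

Lemma alt_hsum_sum (I : finType) (P : pred I) (f : I -> nat -> F) :
  alt_hsum N H u (fun k => \sum_(i | P i) f i k) = \sum_(i | P i) alt_hsum N H u (f i).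
Proof.
rewrite /alt_hsum exchange_big; apply: eq_bigr => k _.
by rewrite mulr_sumr !mulr_suml; apply: eq_bigr => i _.
Qed.

Lemma alt_hsumM f g :
  alt_hsum N H u f * alt_hsum N H u g =
  \sum_(0 <= k < N.+1) \sum_(0 <= l < N.+1)
     (-1) ^+ (k + l) * f k * g l * H ^+ (2 * N - k - l) * u ^+ (k + l).
Proof.
rewrite /alt_hsum mulr_suml; apply: eq_big_nat => k /andP[_ hk].
rewrite mulr_sumr; apply: eq_big_nat => l /andP[_ hl].
have -> : (2 * N - k - l = (N - k) + (N - l))%N by lia.
rewrite !exprD; ring.
Qed.

End AltHsum.

Section Factorization.
Variables (F : comNzRingType) (n : nat) (ai : 'I_n -> F) (H u : F).

Lemma hprodT_C1 i : hprod ai [set: 'I_n] H u = (H - ai i * u) * hprod ai (~: [set i]) H u.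
Proof. by rewrite /hprod (big_setD1 i) ?finset.in_setT // finset.setTD. Qed.

Lemma hprodC1_C2 i j : j != i ->
  hprod ai (~: [set i]) H u = (H - ai j * u) * hprod ai (~: [set i; j]) H u.
Proof.
by move=> ji; rewrite /hprod (big_setD1 j) ?in_setC1 // finset.setDE -finset.setCU.
Qed.

Lemma hprodT_C2 i j : j != i ->
  hprod ai [set: 'I_n] H u * hprod ai (~: [set i; j]) H u
  = hprod ai (~: [set i]) H u * hprod ai (~: [set j]) H u.
Proof. by move=> ji; rewrite (hprodT_C1 j) (hprodC1_C2 ji); ring. Qed.

End Factorization.

Lemma card_setC1 n (i : 'I_n) : #|~: [set i]| = n.-1.
Proof. by rewrite cardsC1 card_ord. Qed.

Lemma card_setC2 n (i j : 'I_n) : i != j -> #|~: [set i; j]| = (n - 2)%N.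
Proof. by move=> ij; rewrite cardsCs finset.setCK card_ord cards2 ij. Qed.

Section EsymGeneratingSums.
Variables (F : fieldType) (n : nat) (ai : 'I_n -> F) (H u : F).

Lemma hprod_coef (I : {set 'I_n}) :
  \sum_(j < #|I|.+1) (\prod_(l in I) ('X - (ai l)%:P))`_j * H ^+ j * u ^+ (#|I| - j)
  = hprod ai I H u.
Proof.
set p := \prod_(l in I) _.
have size_p : size p = #|I|.+1.
  by rewrite /p -big_filter size_prod_XsubC cardE /enum_mem.
have lead_p : p`_#|I| = 1.
  by have := lead_coef_prod_XsubC (index_enum 'I_n) (mem I) ai; rewrite lead_coefE size_p.
have [->|u0] := eqVneq u 0.
  rewrite /hprod big_ord_recr /= lead_p subnn !mulr1 mul1r big1 ?add0r.
    by under eq_bigr do rewrite mulr0 subr0; rewrite prodr_const.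
  by move=> j _; rewrite expr0n subn_eq0 leqNgt ltn_ord /= mulr0.
transitivity (u ^+ #|I| * p.[H / u]).
  rewrite (horner_coef_wide _ (eq_leq size_p)) mulr_sumr; apply: eq_bigr => j _.
  have le_jI : (j <= #|I|)%N by rewrite -ltnS.
  rewrite [u ^+ #|I|](_ : _ = u ^+ (#|I| - j) * u ^+ j) ?expr_div_n; last first.
    by rewrite -exprD subnK.
  field.
  by rewrite expf_neq0.
rewrite horner_prod -prodrMl; apply: eq_bigr => l _; rewrite hornerXsubC.
by field.
Qed.

Lemma alt_hsum_esym (I : {set 'I_n}) N : (#|I| <= N)%N ->
  alt_hsum N H u (fun k => Defs.esym ai I k) = H ^+ (N - #|I|) * hprod ai I H u.
Proof.
move=> le_IN; rewrite /alt_hsum (big_cat_nat (n := #|I|.+1)) //=.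
rewrite [X in _ + X]big1_seq ?addr0; last first.
  move=> m /andP[_]; rewrite mem_index_iota => /andP[lt_Im _].
  by rewrite /Defs.esym leqNgt lt_Im /= mulr0 !mul0r.
rewrite big_nat_rev /= add0n big_mkord -hprod_coef mulr_sumr.
apply: eq_bigr => j _.
have le_jI : (j <= #|I|)%N by rewrite -ltnS.
rewrite subSS /Defs.esym leq_subr subKn // mulrA -exprD -signr_odd oddD addbb mul1r.
have -> : (N - (#|I| - j) = (N - #|I|) + j)%N by lia.
by rewrite exprD; ring.
Qed.

Lemma alt_hsum_esym_shift (I : {set 'I_n}) N d : (d + #|I| <= N)%N ->
  alt_hsum N H u (fun k => Defs.esym ai I (k%:Z - d%:Z))
  = (-1) ^+ d * u ^+ d * H ^+ (N - d - #|I|) * hprod ai I H u.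
Proof.
move=> le_dIN; rewrite /alt_hsum (big_cat_nat (n := d)) //=; last by lia.
rewrite big_nat_cond big1 ?add0r; last first.
  move=> k /andP[/andP[_ lt_kd] _].
  have : k%:Z - d%:Z < 0 by rewrite subr_lt0 ltz_nat.
  by case: (k%:Z - d%:Z) => // m _; rewrite /Defs.esym mulr0 !mul0r.
rewrite -{1}[d]add0n big_addn.
have -> : (N.+1 - d = (N - d).+1)%N by lia.
rewrite -mulrA -alt_hsum_esym; last by lia.
rewrite /alt_hsum mulr_sumr; apply: eq_bigr => m _.
rewrite PoszD addrK subnDA !exprD [(N - m - d)%N]subnAC; ring.
Qed.

Lemma alt_hsum_sigma : alt_hsum n H u (fun k => sigma ai k) = hprod ai [set: 'I_n] H u.
Proof. by rewrite alt_hsum_esym cardsT card_ord ?subnn ?mul1r. Qed.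

Lemma alt_hsum_sigma1 i :
  alt_hsum n H u (fun k => sigma1 ai i k) = H * hprod ai (~: [set i]) H u.
Proof.
have n_gt0 : (0 < n)%N := leq_ltn_trans (leq0n i) (ltn_ord i).
rewrite /sigma1 alt_hsum_esym card_setC1 ?leq_pred //.
by rewrite (_ : (n - n.-1 = 1)%N) ?expr1 //; lia.
Qed.

Lemma alt_hsum_sigma1_pred i :
  alt_hsum n H u (fun k => sigma1 ai i (k%:Z - 1)) = - u * hprod ai (~: [set i]) H u.
Proof.
have n_gt0 : (0 < n)%N := leq_ltn_trans (leq0n i) (ltn_ord i).
rewrite /sigma1 (@alt_hsum_esym_shift _ _ 1) card_setC1; last by lia.
by rewrite (_ : (n - 1 - n.-1 = 0)%N) ?expr0 ?mulr1 ?expr1 ?mulN1r //; lia.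
Qed.

Lemma alt_hsum_sigma2_pred i j : i != j ->
  alt_hsum n H u (fun k => sigma2 ai i j (k%:Z - 1))
  = - u * H * hprod ai (~: [set i; j]) H u.
Proof.
move=> ij; have n_gt1 : (1 < n)%N by have := max_card [set i; j]; rewrite cards2 ij card_ord.
rewrite /sigma2 (@alt_hsum_esym_shift _ _ 1) card_setC2 //; last by lia.
by rewrite (_ : (n - 1 - (n - 2) = 1)%N) ?expr1 ?mulN1r //; lia.
Qed.

Lemma alt_hsum_sigma2_pred2 i j : i != j ->
  alt_hsum n H u (fun k => sigma2 ai i j (k%:Z - 2))
  = u ^+ 2 * hprod ai (~: [set i; j]) H u.
Proof.
move=> ij; have n_gt1 : (1 < n)%N by have := max_card [set i; j]; rewrite cards2 ij card_ord.
rewrite /sigma2 (@alt_hsum_esym_shift _ _ 2) card_setC2 //; last by lia.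
by rewrite (_ : (n - 2 - (n - 2) = 0)%N) ?expr0 ?mulr1 ?sqrrN ?expr1n ?mul1r //; lia.
Qed.

End EsymGeneratingSums.

Section QuadraticIdentity.
Variables (F : comNzRingType) (n : nat) (ai : 'I_n -> F) (H u : F).
Variables (w : 'I_n -> F) (nu a : F).

Local Notation P := (hprod ai [set: 'I_n] H u).
Local Notation P1 i := (hprod ai (~: [set i]) H u).
Local Notation P2 i j := (hprod ai (~: [set i; j]) H u).
Local Notation W := (\sum_(i < n) w i * P1 i).

Lemma hprod_quadratic_identity :
  (H - a * u) * (nu * P - u * W) ^+ 2
  + u * P * (nu ^+ 2 * a * P + 2 * nu * (H - a * u) * W
             - u * \sum_(i < n) w i ^+ 2 * P1 i
             + (a * u ^+ 2 - u * H) * \sum_(i < n) \sum_(j < n | j != i) w i * w j * P2 i j)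
  = - u ^+ 3 * \sum_(i < n) w i ^+ 2 * (a - ai i) * P1 i ^+ 2 + nu ^+ 2 * (H * P ^+ 2).
Proof.
set Dg := \sum_(i < n) w i ^+ 2 * P1 i ^+ 2.
set Off := \sum_(i < n) \sum_(j < n | j != i) w i * w j * (P1 i * P1 j).
set Tw := \sum_(i < n) w i ^+ 2 * ai i * P1 i ^+ 2.
have P_diag : P * \sum_(i < n) w i ^+ 2 * P1 i = H * Dg - u * Tw.
  rewrite mulr_sumr !mulr_sumr -sumrB; apply: eq_bigr => i _.
  by rewrite (hprodT_C1 _ _ _ i); ring.
have P_off : P * \sum_(i < n) \sum_(j < n | j != i) w i * w j * P2 i j = Off.
  rewrite mulr_sumr; apply: eq_bigr => i _; rewrite mulr_sumr; apply: eq_bigr => j ji.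
  by rewrite -hprodT_C2 //; ring.
have W_sqr : W ^+ 2 = Dg + Off.
  rewrite expr2 mulr_suml -big_split; apply: eq_bigr => i _.
  rewrite mulr_sumr (bigD1 i) //=; congr (_ + _); first ring.
  by apply: eq_bigr => j _; ring.
have sum_a_sub_ai : \sum_(i < n) w i ^+ 2 * (a - ai i) * P1 i ^+ 2 = a * Dg - Tw.
  by rewrite /Dg /Tw mulr_sumr -sumrB; apply: eq_bigr => i _; ring.
rewrite sum_a_sub_ai.
transitivity ((H - a * u) * (nu ^+ 2 * P ^+ 2 - 2 * nu * u * P * W + u ^+ 2 * W ^+ 2)
  + u * (nu ^+ 2 * a * P ^+ 2 + 2 * nu * (H - a * u) * P * W)
  - u ^+ 2 * (P * \sum_(i < n) w i ^+ 2 * P1 i)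
  + (a * u ^+ 2 - u * H) * u * (P * \sum_(i < n) \sum_(j < n | j != i) w i * w j * P2 i j)).
  by ring.
by rewrite P_diag P_off W_sqr; ring.
Qed.

End QuadraticIdentity.

Lemma Acoef_sigma (F : comNzRingType) n (ai : 'I_n -> F) k : (k <= n)%N ->
  Acoef ai (n - k) = (-1) ^+ k * sigma ai k.
Proof.
move=> le_kn; rewrite /sigma /Defs.esym cardsT card_ord le_kn.
rewrite mulrA -exprD -signr_odd oddD addbb mul1r /Acoef.
by under [in RHS]eq_bigl => l do rewrite finset.in_setT.
Qed.

Section ClosedForms.
Variables (F : fieldType) (n : nat) (ai : 'I_n -> F) (H Py : F).

Local Notation u := (Py ^+ 2).
Local Notation P := (hprod ai [set: 'I_n] H u).
Local Notation P1 i := (hprod ai (~: [set i]) H u).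
Local Notation P2 i j := (hprod ai (~: [set i; j]) H u).

Lemma sum_Acoef_hprod :
  \sum_(0 <= k < n.+1) Acoef ai (n - k) * H ^+ (n - k) * Py ^+ (2 * k + 1) = Py * P.
Proof.
rewrite -alt_hsum_sigma /alt_hsum mulr_sumr; apply: eq_big_nat => k /andP[_ lt_kn].
rewrite Acoef_sigma; last by rewrite -ltnS.
by rewrite exprD exprM expr1; ring.
Qed.

Lemma sum_btilde_hprod (w : 'I_n -> F) (nu Pi : F) :
  \sum_(0 <= k < n.+1) (-1) ^+ k *
      (nu * sigma ai k + \sum_(i < n) w i * sigma1 ai i (k%:Z - 1))
      * H ^+ (n - k) * Pi * Py ^+ (2 * k)
  = Pi * (nu * P - u * \sum_(i < n) w i * P1 i).
Proof.
transitivity (Pi * alt_hsum n H u (fun k =>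
    nu * sigma ai k + \sum_(i < n) w i * sigma1 ai i (k%:Z - 1))).
  by rewrite /alt_hsum mulr_sumr; apply: eq_bigr => k _; rewrite exprM; ring.
rewrite alt_hsumD alt_hsumZ alt_hsum_sigma alt_hsum_sum mulr_sumr.
congr (_ * (_ + _)); rewrite -sumrN; apply: eq_bigr => i _.
by rewrite alt_hsumZ alt_hsum_sigma1_pred; ring.
Qed.

Lemma sum_ctilde_hprod (c1 c2 : 'I_n -> F) (c3 : 'I_n -> 'I_n -> F) (nu a : F) :
  \sum_(0 <= k < n.+1) (-1) ^+ k.+1 / 2 *
      (nu ^+ 2 * a * sigma ai k
       + 2 * nu * (\sum_(i < n) c1 i * (sigma1 ai i k + a * sigma1 ai i (k%:Z - 1)))
       + \sum_(i < n) c2 i * sigma1 ai i (k%:Z - 1)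
       + \sum_(i < n) \sum_(j < n | j != i)
           c3 i j * (sigma2 ai i j (k%:Z - 1) + a * sigma2 ai i j (k%:Z - 2)))
      * H ^+ (n - k) * Py ^+ (2 * k + 1)
  = - Py / 2 * (nu ^+ 2 * a * P + 2 * nu * (H - a * u) * \sum_(i < n) c1 i * P1 i
                - u * \sum_(i < n) c2 i * P1 i
                + (a * u ^+ 2 - u * H) * \sum_(i < n) \sum_(j < n | j != i) c3 i j * P2 i j).
Proof.
transitivity (- Py / 2 * alt_hsum n H u (fun k =>
     nu ^+ 2 * a * sigma ai k
     + 2 * nu * (\sum_(i < n) c1 i * (sigma1 ai i k + a * sigma1 ai i (k%:Z - 1)))
     + \sum_(i < n) c2 i * sigma1 ai i (k%:Z - 1)
     + \sum_(i < n) \sum_(j < n | j != i)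
         c3 i j * (sigma2 ai i j (k%:Z - 1) + a * sigma2 ai i j (k%:Z - 2)))).
  rewrite /alt_hsum mulr_sumr; apply: eq_bigr => k _.
  by rewrite exprS exprD exprM expr1; ring.
rewrite !alt_hsumD !alt_hsumZ alt_hsum_sigma !alt_hsum_sum.
congr (_ * (_ + _ + _ + _)).
- rewrite -[RHS]mulrA [in RHS]mulr_sumr; congr (_ * _); apply: eq_bigr => i _.
  by rewrite alt_hsumZ alt_hsumD alt_hsumZ alt_hsum_sigma1 alt_hsum_sigma1_pred; ring.
- rewrite mulr_sumr -sumrN; apply: eq_bigr => i _.
  by rewrite alt_hsumZ alt_hsum_sigma1_pred; ring.
- rewrite mulr_sumr; apply: eq_bigr => i _; rewrite alt_hsum_sum mulr_sumr.
  apply: eq_bigr => j ji; rewrite eq_sym in ji.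
  rewrite alt_hsumZ alt_hsumD alt_hsumZ alt_hsum_sigma2_pred // alt_hsum_sigma2_pred2 //.
  ring.
Qed.

Lemma sum_sigma_sigma_hprod :
  \sum_(0 <= k < n.+1) \sum_(0 <= l < n.+1)
     (-1) ^+ (k + l) * sigma ai k * sigma ai l * H ^+ (2 * n + 1 - k - l) * Py ^+ (2 * (k + l))
  = H * P ^+ 2.
Proof.
rewrite -alt_hsum_sigma expr2 alt_hsumM mulr_sumr; apply: eq_big_nat => k /andP[_ lt_kn].
rewrite mulr_sumr; apply: eq_big_nat => l /andP[_ lt_ln].
have -> : (2 * n + 1 - k - l = (2 * n - k - l).+1)%N by lia.
by rewrite exprS exprM; ring.
Qed.

Lemma sum_sigma1_sigma1_hprod (c : 'I_n -> F) :
  \sum_(1 <= k < n.+1) \sum_(1 <= l < n.+1)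
     ((-1) ^+ (k + l).+1 *
       \sum_(i < n) c i * sigma1 ai i (k%:Z - 1) * sigma1 ai i (l%:Z - 1))
     * H ^+ (2 * n - k - l) * Py ^+ (2 * (k + l + 1))
  = - u ^+ 3 * \sum_(i < n) c i * P1 i ^+ 2.
Proof.
have sigma1_neg i : sigma1 ai i (0%:Z - 1) = 0 by [].
have sum0l l : \sum_(i < n) c i * sigma1 ai i (0%:Z - 1) * sigma1 ai i (l%:Z - 1) = 0.
  by apply: big1 => i _; rewrite sigma1_neg mulr0 mul0r.
have sum0r k : \sum_(i < n) c i * sigma1 ai i (k%:Z - 1) * sigma1 ai i (0%:Z - 1) = 0.
  by apply: big1 => i _; rewrite sigma1_neg mulr0.
transitivity (\sum_(0 <= k < n.+1) \sum_(0 <= l < n.+1)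
     ((-1) ^+ (k + l).+1 *
       \sum_(i < n) c i * sigma1 ai i (k%:Z - 1) * sigma1 ai i (l%:Z - 1))
     * H ^+ (2 * n - k - l) * Py ^+ (2 * (k + l + 1))).
  rewrite [RHS]big_ltn // [X in _ = X + _]big1 => [|l _]; last first.
    by rewrite sum0l mulr0 !mul0r.
  rewrite add0r; apply: eq_bigr => k _.
  by rewrite [RHS]big_ltn // sum0r mulr0 !mul0r add0r.
transitivity (\sum_(i < n) - u * c i * (alt_hsum n H u (fun k => sigma1 ai i (k%:Z - 1))
                                        * alt_hsum n H u (fun k => sigma1 ai i (k%:Z - 1)))).
  under [RHS]eq_bigr => i _ do rewrite alt_hsumM !mulr_sumr.
  rewrite [RHS]exchange_big; apply: eq_bigr => k _.
  under [RHS]eq_bigr => i _ do rewrite mulr_sumr.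
  rewrite [RHS]exchange_big; apply: eq_bigr => l _.
  rewrite mulr_sumr !mulr_suml; apply: eq_bigr => i _.
  by rewrite exprM (exprD _ (k + l) 1) exprS; ring.
rewrite mulr_sumr; apply: eq_bigr => i _.
by rewrite alt_hsum_sigma1_pred; ring.
Qed.

End ClosedForms.

Theorem proposition26 (R : realType) (n : nat) (ai : 'I_n -> R)
    (eps xi : 'I_n -> R) (nu : R) (a Pa Py y : R) :
  (1 <= n)%N ->
  injective ai ->
  (forall i, eps i = 1 \/ eps i = -1) ->
  0 < a ->
  (forall i, 0 < eps i * (a - ai i)) ->
  let Delta := fun (b : R) (i : 'I_n) => eps i * (b - ai i) in
  let x := fun b : R => nu / 2 * b + \sum_(i < n) xi i / Num.sqrt (Delta b i) in
  derive1 x a != 0 ->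
  let D := Delta a in
  let Pi := a / derive1 x a * Pa in
  let H := Pi ^+ 2 + a * Py ^+ 2 in
  let s := sigma ai in
  let s1 := sigma1 ai in
  let s2 := sigma2 ai in
  let bt := fun k : nat => (-1) ^+ k *
      (nu * s k + \sum_(i < n) xi i / Num.sqrt (D i) * s1 i (k%:Z - 1)) in
  let ct := fun k : nat => (-1) ^+ k.+1 / 2 *
      (nu ^+ 2 * a * s k
       + 2 * nu * (\sum_(i < n) xi i / Num.sqrt (D i) * (s1 i k + a * s1 i (k%:Z - 1)))
       + \sum_(i < n) xi i ^+ 2 / D i * s1 i (k%:Z - 1)
       + \sum_(i < n) \sum_(j < n | j != i)
           xi i * xi j / Num.sqrt (D i * D j)
             * (s2 i j (k%:Z - 1) + a * s2 i j (k%:Z - 2))) in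
  let G := \sum_(0 <= k < n.+1) Acoef ai (n - k) * H ^+ (n - k) * Py ^+ (2 * k + 1) in
  let Q1 := \sum_(0 <= k < n.+1) bt k * H ^+ (n - k) * Pi * Py ^+ (2 * k) in
  let Q2 := \sum_(0 <= k < n.+1) ct k * H ^+ (n - k) * Py ^+ (2 * k + 1) in
  let S1 := Q1 + y * G in
  let S2 := Q2 + y * Q1 + y ^+ 2 / 2 * G in
  let Qc := fun k l : nat => (-1) ^+ (k + l).+1 *
      \sum_(i < n) eps i * xi i ^+ 2 * s1 i (k%:Z - 1) * s1 i (l%:Z - 1) in
  S1 ^+ 2 - 2 * G * S2 =
    \sum_(1 <= k < n.+1) \sum_(1 <= l < n.+1)
       Qc k l * H ^+ (2 * n - k - l) * Py ^+ (2 * (k + l + 1))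
    + nu ^+ 2 * \sum_(0 <= k < n.+1) \sum_(0 <= l < n.+1)
       (-1) ^+ (k + l) * s k * s l * H ^+ (2 * n + 1 - k - l) * Py ^+ (2 * (k + l)).
Proof.
move=> _ _ eps_sign _ D_gt0 Delta x _ D Pi H s s1 s2 bt ct G Q1 Q2 S1 S2 Qc.
pose w i := xi i / Num.sqrt (D i).
have w_sqr i : xi i ^+ 2 / D i = w i ^+ 2.
  by rewrite expr_div_n sqr_sqrtr // ltW // D_gt0.
have w_mul i j : xi i * xi j / Num.sqrt (D i * D j) = w i * w j.
  by rewrite sqrtrM ?mulf_div // ltW // D_gt0.
have eps_xi i : eps i * xi i ^+ 2 = w i ^+ 2 * (a - ai i).
  have eps_sqr : eps i ^+ 2 = 1 by case: (eps_sign i) => ->; rewrite ?sqrrN expr1n.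
  have -> : a - ai i = eps i * D i by rewrite /D /Delta mulrA -expr2 eps_sqr mul1r.
  by rewrite -w_sqr; field; exact: lt0r_neq0 (D_gt0 i).
have -> : S1 ^+ 2 - 2 * G * S2 = Q1 ^+ 2 - 2 * G * Q2 by rewrite /S1 /S2; field.
rewrite /G sum_Acoef_hprod /Q1 /bt sum_btilde_hprod /Q2 /ct sum_ctilde_hprod.
rewrite /Qc sum_sigma1_sigma1_hprod sum_sigma_sigma_hprod.
set P := hprod ai [set: 'I_n] H (Py ^+ 2).
pose P1 i := hprod ai (~: [set i]) H (Py ^+ 2).
pose P2 i j := hprod ai (~: [set i; j]) H (Py ^+ 2).
have -> : forall V X, (Pi * V) ^+ 2 - 2 * (Py * P) * (- Py / 2 * X)
                      = (H - a * Py ^+ 2) * V ^+ 2 + Py ^+ 2 * P * X.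
  by move=> V X; rewrite /H; field.
have -> : \sum_(i < n) eps i * xi i ^+ 2 * P1 i ^+ 2
          = \sum_(i < n) w i ^+ 2 * (a - ai i) * P1 i ^+ 2.
  by apply: eq_bigr => i _; rewrite eps_xi.
have -> : \sum_(i < n) xi i ^+ 2 / D i * P1 i = \sum_(i < n) w i ^+ 2 * P1 i.
  by apply: eq_bigr => i _; rewrite w_sqr.
have -> : \sum_(i < n) \sum_(j < n | j != i) xi i * xi j / Num.sqrt (D i * D j) * P2 i j
          = \sum_(i < n) \sum_(j < n | j != i) w i * w j * P2 i j.
  by apply: eq_bigr => i _; apply: eq_bigr => j _; rewrite w_mul.
exact: hprod_quadratic_identity.
Qed.
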